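(* Let $p\ge1$, $q\ge0$, $N=p+q\ge2$, and let $W_2,\dots,W_N$ be the polynomials in $h',h_2,\dots,h_{N-1},e_{\mu\nu},f_{\mu\nu}$ defined by $$\det(iC_{p,q}-\lambda\,\mathrm{Id}_N)+\lambda\det(i(C_{p,q})_{(11)}-\lambda\,\mathrm{Id}_{N-1})=\sum_{k=2}^N W_k\lambda^{N-k}.$$ Then $\partial W_2/\partial h'=0$, and for every $3\le k\le N$, $$N(N-1)\frac{\partial W_k}{\partial h'}-(N+1-k)\Big(\prod_{\rho=1}^N g_{\rho\rho}\Big)W_{k-1}=0 .$$
   Context: $g_{\mu\mu}=1$ for $\mu\le p$, $g_{\mu\mu}=-1$ for $p<\mu\le N$; $i=\sqrt{-1}$. The variables $h',h_2,\dots,h_{N-1}$ and $e_{\mu\nu},f_{\mu\nu}$ ($1\le\mu<\nu\le N$) are independent indeterminates, with $e_{\nu\mu}:=-e_{\mu\nu}$, $f_{\nu\mu}:=f_{\mu\nu}$. For $2\le\mu\le N$, $$Y_\mu=-\Big(\prod_{\rho=1}^N g_{\rho\rho}\Big)\frac{h'}{N(N-1)}+\sum_{\nu=2}^{\mu-1}\frac{1-\nu}{N-1}g_{\nu\nu}g_{\nu+1,\nu+1}h_\nu+\sum_{\nu=\mu}^{N-1}\frac{N-\nu}{N-1}g_{\nu\nu}g_{\nu+1,\nu+1}h_\nu .$$ $C_{p,q}$ is the $N\times N$ matrix with $(C_{p,q})_{11}=0$, $(C_{p,q})_{\mu\mu}=-iY_\mu$ ($\mu\ge2$), $(C_{p,q})_{\mu\nu}=-g_{\nu\nu}(e_{\mu\nu}+if_{\mu\nu})$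 ($\mu<\nu$), $(C_{p,q})_{\mu\nu}=g_{\nu\nu}(e_{\nu\mu}-if_{\nu\mu})$ ($\mu>\nu$); $(C_{p,q})_{(11)}$ is $C_{p,q}$ with first row and column deleted. (These $W_k$ are the Casimir invariants of the contraction $K\mathfrak{su}(p-1,q)$ of $\mathfrak{su}(p,q)$ in the coordinates dual to the basis $H',H_2,\dots,H_{N-1},E_{\mu\nu},F_{\mu\nu}$.) *)

From HB Require Import structures.
From mathcomp Require Import all_boot all_order all_algebra all_field.
Set Implicit Arguments. Unset Strict Implicit. Unset Printing Implicit Defensive.
Import Order.TTheory GRing.Theory Num.Theory.
Local Open Scope ring_scope.

(* Conventions: indices mu, nu are 1-based natural numbers as in the paper.
   A is an arbitrary commutative algC-algebra holding the (independent)
   values of h_2..h_{N-1}, e_{mu nu}, f_{mu nu} (only mu < nu used).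
   P := {poly A} : polynomials in the indeterminate h' (= 'X).
   {poly P}     : polynomials in lambda. *)

Section KSU.
Variables (p q : nat) (A : comAlgType algC)
          (h : nat -> A) (e f : nat -> nat -> A).

Definition NN : nat := p + q.

Definition gm (mu : nat) : algC := if (mu <= p)%N then 1 else -1.

Definition gprod : algC := \prod_(1 <= rho < NN.+1) gm rho.

Definition ctP (c : algC) : {poly A} := (c%:A)%:P.

Definition Ym (mu : nat) : {poly A} :=
  ctP (- gprod / (NN * (NN - 1))%:R) * 'X
  + (\sum_(2 <= nu < mu) ((1 - nu%:R) / (NN - 1)%:R * gm nu * gm nu.+1) *: h nu
     + \sum_(mu <= nu < NN) ((NN%:R - nu%:R) / (NN - 1)%:R * gm nu * gm nu.+1) *: h nu)%:P.

(* entries of C_{p,q}, 1-based *)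
Definition Cent (mu nu : nat) : {poly A} :=
  if mu == nu then (if mu == 1%N then 0 else ctP (- 'i) * Ym mu)
  else if (mu < nu)%N then - ctP (gm nu) * ((e mu nu)%:P + ctP 'i * (f mu nu)%:P)
  else ctP (gm nu) * ((e nu mu)%:P - ctP 'i * (f nu mu)%:P).

Definition Mfull : 'M[{poly {poly A}}]_NN :=
  \matrix_(i < NN, j < NN)
    ((ctP 'i * Cent i.+1 j.+1)%:P - (i == j)%:R * 'X).

Definition Mminor : 'M[{poly {poly A}}]_(NN.-1) :=
  \matrix_(i < NN.-1, j < NN.-1)
    ((ctP 'i * Cent i.+2 j.+2)%:P - (i == j)%:R * 'X).

Definition Dpoly : {poly {poly A}} := \det Mfull + 'X * \det Mminor.

Definition Wk (k : nat) : {poly A} := Dpoly`_(NN - k).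

End KSU.

From HB Require Import structures.
From mathcomp Require Import all_boot all_order all_algebra all_field.
From mathcomp Require Import ring zify.
Set Implicit Arguments. Unset Strict Implicit. Unset Printing Implicit Defensive.
Import Order.TTheory GRing.Theory Num.Theory.
Local Open Scope ring_scope.

(* Only the diagonal entries -iY_mu (mu >= 2) of C_{p,q} depend on h', all
   with the same slope c = -g/(N(N-1)), g the product of the g_{rho rho}.  Up
   to sign, the generating polynomial det(iC - lambda) + lambda det(iC_(11) -
   lambda) is the single determinant det(lambda Id - iC - lambda E_11), and each
   of its entries is annihilated by the derivation d/dh' + c d/dlambda: the
   entries lambda - Y_mu because Y_mu has slope c, the (1,1) entry because it
   is 0, the others because they are constants.  Hence so is the determinant,
   and on the coefficient of lambda^(N-k) this reads
   dW_k/dh' = -c (N+1-k) W_{k-1}.  For k = 2 the right side involves W_1,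
   which up to sign is the difference of the traces of iC and of its minor,
   i.e. (iC)_11 = 0. *)

Section Derivation.
Variables (T : comPzRingType) (D : {additive T -> T}).
Hypothesis derivationM : forall x y, D (x * y) = D x * y + x * D y.

Lemma derivation1 : D 1 = 0.
Proof.
by apply/(addIr (D 1)); rewrite add0r -[in RHS](mulr1 1) derivationM mulr1 mul1r.
Qed.

Lemma derivation_sign n : D ((-1) ^+ n) = 0.
Proof.
elim: n => [|n IHn]; first exact: derivation1.
by rewrite exprS derivationM IHn raddfN derivation1 oppr0 mul0r mulr0 addr0.
Qed.

Lemma derivation_prod_eq0 I (r : seq I) (P : pred I) (F : I -> T) :
  (forall i, P i -> D (F i) = 0) -> D (\prod_(i <- r | P i) F i) = 0.
Proof.
move=> DF0; apply: (big_ind (fun x => D x = 0)) => [|x y Dx Dy|//].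
  exact: derivation1.
by rewrite derivationM Dx Dy mul0r mulr0 addr0.
Qed.

Lemma derivation_det_eq0 n (M : 'M[T]_n) :
  (forall i j, D (M i j) = 0) -> D (\det M) = 0.
Proof.
move=> DM0; rewrite raddf_sum big1 // => s _.
by rewrite derivationM derivation_sign derivation_prod_eq0 ?mul0r ?mulr0 ?addr0.
Qed.

End Derivation.

Lemma det_add_corner (R : comPzRingType) n (M : 'M[R]_n.+1) x :
  \det (M + x *: delta_mx ord0 ord0) = \det M + x * \det (row' ord0 (col' ord0 M)).
Proof.
have cofE j : cofactor (M + x *: delta_mx ord0 ord0) ord0 j = cofactor M ord0 j.
  rewrite /cofactor; congr (_ * \det _).
  by apply/matrixP => a b; rewrite !mxE /= mulr0 addr0.
rewrite !(expand_det_row _ ord0) !big_ord_recl cofE.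
rewrite (eq_bigr (fun j => M ord0 (lift ord0 j) * cofactor M ord0 (lift ord0 j)));
  last first.
  by move=> j _; rewrite cofE !mxE mulr0 addr0.
by rewrite !mxE eqxx mulr1 mulrDl addrAC /cofactor expr0 mul1r.
Qed.

Section BorderedCharPoly.
Variable R : comNzRingType.

Definition bordered_char_poly n (M : 'M[R]_n.+1) : {poly R} :=
  char_poly M - 'X * char_poly (row' ord0 (col' ord0 M)).

Lemma bordered_char_polyE n (M : 'M[R]_n.+1) :
  bordered_char_poly M = \det (char_poly_mx M - 'X *: delta_mx ord0 ord0).
Proof. by rewrite -scaleNr det_add_corner row'_col'_char_poly_mx mulNr. Qed.

Lemma coef_bordered_char_poly n (M : 'M[R]_n.+1) :
  (bordered_char_poly M)`_n = - M ord0 ord0.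
Proof.
rewrite coefB coefXM (char_poly_trace M) // /mxtrace big_ord_recl opprD.
case: n M => [|n] M /=; first by rewrite big_ord0 subr0 oppr0 addr0.
rewrite char_poly_trace // /mxtrace opprK -addrA -[RHS]addr0; congr (_ + _).
by apply/eqP; rewrite addrC subr_eq0; apply/eqP/eq_bigr => i _; rewrite !mxE.
Qed.
End BorderedCharPoly.

Section DirectionalDerivative.
Variables (R : comNzRingType) (c : {poly R}).

Definition dirderiv (P : {poly {poly R}}) : {poly {poly R}} :=
  map_poly deriv P + c%:P * P^`().

Fact dirderiv_is_nmod_morphism : nmod_morphism dirderiv.
Proof.
split=> [|P Q]; first by rewrite /dirderiv raddf0 deriv0 mulr0 addr0.
by rewrite /dirderiv raddfD derivD mulrDr addrACA.
Qed.

HB.instance Definition _ :=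
  GRing.isNmodMorphism.Build _ _ dirderiv dirderiv_is_nmod_morphism.

Lemma dirderivM P Q : dirderiv (P * Q) = dirderiv P * Q + P * dirderiv Q.
Proof.
have map_derivM : map_poly deriv (P * Q) = map_poly deriv P * Q + P * map_poly deriv Q.
  apply/polyP => k; rewrite coefD !coef_map !coefM raddf_sum -big_split /=.
  by apply: eq_bigr => i _; rewrite derivM !coef_map.
rewrite /dirderiv map_derivM derivM; ring.
Qed.

Lemma dirderivC a : dirderiv a%:P = (a^`())%:P.
Proof. by rewrite /dirderiv map_polyC derivC mulr0 addr0. Qed.

Lemma dirderivX : dirderiv 'X = c%:P.
Proof.
rewrite /dirderiv derivX mulr1.
have -> : map_poly deriv 'X = 0 :> {poly {poly R}}.
  by apply/polyP => k; rewrite coef_map coefX coef0 raddfMn /= -polyC1 derivC mul0rn.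
by rewrite add0r.
Qed.

Lemma coef_dirderiv_eq0 P : dirderiv P = 0 ->
  forall k, (P`_k)^`() = - (c * P`_k.+1 *+ k.+1).
Proof.
move=> dP0 k; have := congr1 (fun Q : {poly {poly R}} => Q`_k) dP0.
rewrite coefD coef_map coefCM coef_deriv coef0.
by move/eqP; rewrite addr_eq0 mulrnAr => /eqP.
Qed.

Lemma dirderiv_bordered_char_poly n (M : 'M[{poly R}]_n.+1) :
  (forall i j, (M i j)^`() = c *+ ((i == j) && (i != ord0))) ->
  dirderiv (bordered_char_poly M) = 0.
Proof.
move=> dM; rewrite bordered_char_polyE.
apply: derivation_det_eq0 => [|i j]; first exact: dirderivM.
rewrite !mxE mulr_natr !raddfB !raddfMn /= dirderivX dirderivC dM polyCMn.
case: eqP => [<-|neij].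
  by case: (i == ord0); rewrite /= ?mulr1n ?mulr0n ?subr0 ?oppr0 ?addr0 subrr.
have -> : (i == ord0) && (j == ord0) = false.
  by apply/negbTE/andP => -[/eqP i0 /eqP j0]; apply: neij; rewrite i0 j0.
by rewrite /= !mulr0n !(subrr, oppr0, addr0).
Qed.
End DirectionalDerivative.

Section KSUCasimirs.
Variables (p q : nat) (A : comAlgType algC) (h : nat -> A) (e f : nat -> nat -> A).
Local Notation N := (NN p q).

Lemma ctPM (a b : algC) : ctP A a * ctP A b = ctP A (a * b).
Proof. by rewrite /ctP -polyCM -scalerAl mul1r scalerA. Qed.

Definition Ym_slope : {poly A} := ctP A (- gprod p q / (N * (N - 1))%:R).

Lemma deriv_Ym mu : (Ym p q h mu)^`() = Ym_slope.
Proof. by rewrite /Ym derivD derivM !derivC derivX mul0r add0r mulr1 addr0. Qed.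

Lemma deriv_iCent mu nu :
  (ctP A 'i * Cent p q h e f mu nu)^`() = Ym_slope *+ ((mu == nu) && (mu != 1)%N).
Proof.
rewrite /Cent; case: eqP => [->|_].
  case: eqP => [_|_]; first by rewrite mulr0 deriv0.
  rewrite mulrA ctPM mulrN -expr2 sqrCi opprK derivM derivC mul0r add0r deriv_Ym.
  by rewrite /ctP scale1r polyC1 mul1r.
by case: ifP => _;
  rewrite !(derivM, derivN, derivD, derivB, derivC) !(mul0r, mulr0, add0r, addr0, oppr0).
Qed.

Lemma ctP_nat n : ctP A n%:R = n%:R.
Proof. by rewrite /ctP scaler_nat polyCMn polyC1. Qed.

Lemma mul_Ym_slope : (2 <= N)%N -> (N * (N - 1))%:R * Ym_slope = - ctP A (gprod p q).
Proof.
move=> N2; have NN1 : (N * (N - 1))%:R != 0 :> algC.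
  by rewrite pnatr_eq0 -lt0n muln_gt0 (leq_trans _ N2) // subn_gt0.
by rewrite /Ym_slope -ctP_nat ctPM mulrC divfK // /ctP scaleNr polyCN.
Qed.

Definition iC_mx m : 'M[{poly A}]_m.+1 :=
  \matrix_(i, j) (ctP A 'i * Cent p q h e f i.+1 j.+1).

Lemma Dpoly_bordered_char_poly m : N = m.+1 ->
  Dpoly p q h e f = (-1) ^+ m.+1 * bordered_char_poly (iC_mx m).
Proof.
move=> Nm; rewrite /Dpoly /Mfull /Mminor Nm /=.
have pencilE n (M : 'M_n) (G : nat -> nat -> {poly A}) :
    (forall i j, M i j = G i j) ->
  \matrix_(i < n, j < n) ((G i j)%:P - (i == j)%:R * 'X) = - char_poly_mx M.
  by move=> MG; apply/matrixP => i j; rewrite !mxE MG mulr_natl opprB.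
set G := fun i j => ctP A 'i * Cent p q h e f i.+1 j.+1.
rewrite (pencilE _ (iC_mx m) G) => [|i j]; last by rewrite mxE.
rewrite (pencilE _ (row' ord0 (col' ord0 (iC_mx m))) (fun i j => G i.+1 j.+1))
  => [|i j].
  have detN n (M : 'M[{poly {poly A}}]_n) : \det (- M) = (-1) ^+ n * \det M.
    by rewrite -scaleN1r detZ.
  by rewrite !detN /bordered_char_poly /char_poly exprS; ring.
by rewrite !mxE.
Qed.

Lemma NN_succ : (0 < N)%N -> exists m, N = m.+1.
Proof. by move=> N0; exists N.-1; rewrite prednK. Qed.

Lemma dirderiv_Dpoly : (0 < N)%N -> dirderiv Ym_slope (Dpoly p q h e f) = 0.
Proof.
move=> /NN_succ[m Nm]; rewrite (Dpoly_bordered_char_poly Nm) dirderivM.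
rewrite (derivation_sign (@dirderivM _ _)) dirderiv_bordered_char_poly => [|i j].
  by rewrite mul0r mulr0 addr0.
by rewrite mxE deriv_iCent.
Qed.

Lemma Wk1_eq0 : (0 < N)%N -> Wk p q h e f 1 = 0.
Proof.
move=> /NN_succ[m Nm]; rewrite /Wk (Dpoly_bordered_char_poly Nm) Nm subn1 /=.
rewrite -(rmorph_sign polyC) coefCM coef_bordered_char_poly mxE /Cent /=.
by rewrite mulr0 oppr0 mulr0.
Qed.

Lemma deriv_Wk k : (0 < k <= N)%N ->
  (Wk p q h e f k)^`() = - (Ym_slope * Wk p q h e f k.-1 *+ (N + 1 - k)).
Proof.
case/andP=> k0 kN; rewrite /Wk (coef_dirderiv_eq0 (dirderiv_Dpoly (leq_trans k0 kN))).
have idxE : ((N - k).+1 = N - k.-1)%N by lia.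
by rewrite {1}idxE; congr (- (_ *+ _)); lia.
Qed.
End KSUCasimirs.

Theorem proposition5 (p q : nat) (hp : (1 <= p)%N) (hN : (2 <= p + q)%N)
  (A : comAlgType algC) (h : nat -> A) (e f : nat -> nat -> A) :
  (Wk p q h e f 2)^`() = 0 /\
  (forall k : nat, (3 <= k <= p + q)%N ->
     ((p + q) * (p + q - 1))%:R * (Wk p q h e f k)^`()
     - ((p + q + 1 - k)%:R * ctP A (gprod p q)) * Wk p q h e f k.-1 = 0).
Proof.
have N0 : (0 < p + q)%N by apply: leq_trans hN.
split; first by rewrite deriv_Wk ?hN // Wk1_eq0 // mulr0 mul0rn oppr0.
move=> k /andP[k3 kN]; rewrite deriv_Wk; last by rewrite kN (leq_trans _ k3).
rewrite -(mulr_natr (_ * _)) mulrN !mulrA mul_Ym_slope // /NN.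
ring.
Qed.
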